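(* For integers $d\ge1$ and $s\ge0$, let $F_s^d$ be the number of lattice paths with unit steps $(1,0)$ and $(0,1)$ from $(0,0)$ to $(s+2,s)$ all of whose points other than the endpoint satisfy $x-2<y<x+d$ (the endpoint lies on $y=x-2$). Then for every $\alpha\in(0,1/2)$, $$\sum_{s=0}^\infty F_s^d\,\big(\alpha(1-\alpha)\big)^s=\frac{1}{\alpha^2}\left(1-\frac{1-2\alpha}{(1-\alpha)^2\Big(1-\big(\tfrac{\alpha}{1-\alpha}\big)^{d+2}\Big)}\right).$$ *)

From HB Require Import structures.
From mathcomp Require Import all_boot all_order all_algebra.
From mathcomp Require Import all_classical all_reals all_analysis.
Set Implicit Arguments. Unset Strict Implicit. Unset Printing Implicit Defensive.

(* A lattice path with unit steps (1,0) and (0,1) is encoded as a sequence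
   of booleans: true = step (1,0), false = step (0,1). *)
Definition px (p : seq bool) (k : nat) : nat := count id (take k p).
Definition py (p : seq bool) (k : nat) : nat := count negb (take k p).

(* Path from (0,0) to (s+2,s): 2s+2 steps, s+2 of which are (1,0);
   every point other than the endpoint (i.e. after k < 2s+2 steps)
   satisfies x - 2 < y < x + d (as integers; x - 2 < y <-> x < y + 2). *)
Definition good_path (d s : nat) (p : seq bool) : bool :=
  (size p == (s + 2) + s)%N && (count id p == s + 2)%N &&
  [forall k : 'I_(size p), (px p k < py p k + 2)%N && (py p k < px p k + d)%N].

Definition F (d s : nat) : nat :=
  #|[set t : ((s + 2) + s).-tuple bool | good_path d s t]|.

From HB Require Import structures.
From mathcomp Require Import all_boot all_order all_algebra.
From mathcomp Require Import all_classical all_reals all_analysis.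
From mathcomp Require Import zify ring lra.
Import Order.TTheory GRing.Theory Num.Theory numFieldNormedType.Exports.
Set Implicit Arguments. Unset Strict Implicit. Unset Printing Implicit Defensive.
Local Open Scope classical_set_scope.
Local Open Scope ring_scope.

(* Read a lattice path as a walk at height [2 + y - x]: the paths counted by
   [F d s] are the walks of length [2s + 2] from height 2 that stay strictly
   between 0 and [d + 2] and end at their first visit to 0.  Weighting down
   steps by [alpha] and up steps by [1 - alpha], each such walk has weight
   [alpha^(s+2) (1 - alpha)^s], so the series is [alpha^-2] times the
   probability that a walk going down with probability [alpha], started at 2,
   is ruined at 0 before reaching [d + 2].  Splitting on the first step, the
   ruin probabilities solve [L j = alpha L (j-1) + (1 - alpha) L (j+1)] with
   [L 0 = 1] and [L (d+2) = 0], whence the gambler's ruin formula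
   [L 2 = (r^2 - r^(d+2)) / (1 - r^(d+2))] with [r = alpha / (1 - alpha)]. *)

Lemma big_tuple_cons (R : Type) (idx : R) (op : Monoid.com_law idx)
    (T : finType) n (F : n.+1.-tuple T -> R) :
  \big[op/idx]_(t : n.+1.-tuple T) F t =
  \big[op/idx]_(x : T) \big[op/idx]_(t : n.-tuple T) F [tuple of x :: t].
Proof.
rewrite pair_big (reindex (fun xt : T * n.-tuple T => [tuple of xt.1 :: xt.2])) //=.
exists (fun t => (thead t, behead_tuple t)) => [[x t] _ | t _] /=.
  by congr pair; apply: val_inj.
by rewrite [RHS]tuple_eta.
Qed.

Definition path_weight (R : ringType) (a : R) (p : seq bool) : R :=
  a ^+ count id p * (1 - a) ^+ count negb p.

Fixpoint walk_to_zero (N j : nat) (p : seq bool) : bool :=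
  if p is b :: q then (0 < j < N)%N && walk_to_zero N (if b then j.-1 else j.+1) q
  else j == 0%N.

Definition ruin_weight (R : ringType) (a : R) (N n j : nat) : R :=
  \sum_(t : n.-tuple bool | walk_to_zero N j t) path_weight a t.

Lemma ruin_weight0 (R : ringType) (a : R) N j : ruin_weight a N 0 j = (j == 0%N)%:R.
Proof.
rewrite /ruin_weight big_mkcond (big_pred1 [tuple]) => [/=|t]; last by rewrite [t]tuple0 /= eqxx.
by case: (j == 0%N); rewrite /path_weight /= ?mulr1.
Qed.

Lemma ruin_weightS (R : comRingType) (a : R) N n j :
  ruin_weight a N n.+1 j =
  if (0 < j < N)%N then a * ruin_weight a N n j.-1 + (1 - a) * ruin_weight a N n j.+1
  else 0.
Proof.
rewrite /ruin_weight big_mkcond big_tuple_cons big_bool /=.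
case: (0 < j < N)%N; last by rewrite !big1 ?addr0.
rewrite !mulr_sumr; congr (_ + _); rewrite [RHS]big_mkcond; apply: eq_bigr => t _;
  by case: walk_to_zero; rewrite // /path_weight /= add1n add0n exprS; ring.
Qed.

Lemma walk_to_zeroP N j p :
  walk_to_zero N j p <->
  (forall k, (k < size p)%N -> (px p k < j + py p k < px p k + N)%N) /\
  count id p = (j + count negb p)%N.
Proof.
elim: p j => [|b q IH] j /=.
  by split => [/eqP ->|[_ /eqP]] //; rewrite eq_sym addn_eq0 => /andP[].
split.
- move=> /andP[j_in /IH[inside final]]; split.
  + move=> [_|k k_lt]; first by rewrite /px /py /=; lia.
    by have := inside k k_lt; rewrite /px /py /=; case: b {inside final} j_in; lia.
  + by case: b {inside} final j_in => /=; lia.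
- move=> [inside final].
  have j_in : (0 < j < N)%N by have := inside 0%N isT; rewrite /px /py /=; lia.
  rewrite j_in; apply/IH; split.
  + by move=> k k_lt; have := inside k.+1 k_lt; rewrite /px /py /=; case: b {inside final} j_in; lia.
  + by case: b {inside} final j_in => /=; lia.
Qed.

Lemma count_id_negb (p : seq bool) : (count id p + count negb p)%N = size p.
Proof. exact: count_predC. Qed.

Lemma walk_to_zero_odd N j p : walk_to_zero N j p -> odd (size p) = odd j.
Proof.
case/walk_to_zeroP => _ ups.
by rewrite -count_id_negb ups -addnA addnn oddD odd_double addbF.
Qed.

Lemma walk_to_zero_good_path d s p :
  size p = ((s + 2) + s)%N -> walk_to_zero (d + 2) 2 p = good_path d s p.
Proof.
move=> p_size; have := count_id_negb p; rewrite p_size => counts.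
apply/idP/idP => [/walk_to_zeroP[inside final] | /andP[/andP[_ /eqP ups] /forallP inside]].
- have ups : count id p = (s + 2)%N by lia.
  rewrite /good_path p_size ups !eqxx /=; apply/forallP => k.
  by have := inside k; rewrite p_size ltn_ord => /(_ isT); lia.
- apply/walk_to_zeroP; split; last by lia.
  by move=> k k_lt; have := inside (Ordinal k_lt) => /=; lia.
Qed.

Lemma path_weight_good_path (R : ringType) (a : R) d s p :
  good_path d s p -> path_weight a p = a ^+ (s + 2) * (1 - a) ^+ s.
Proof.
case/andP => /andP[/eqP p_size /eqP ups] _; have := count_id_negb p.
by rewrite p_size ups => counts; rewrite /path_weight ups (_ : count negb p = s) //; lia.
Qed.

Lemma ruin_weight_F (R : ringType) (a : R) d s :
  ruin_weight a (d + 2) ((s + 2) + s) 2 = (F d s)%:R * (a ^+ (s + 2) * (1 - a) ^+ s).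
Proof.
rewrite /ruin_weight /F mulr_natl -sumr_const.
apply: eq_big => t; rewrite (@walk_to_zero_good_path d s) ?size_tuple //.
  by rewrite inE.
exact: path_weight_good_path.
Qed.

Lemma ruin_weight_parity (R : ringType) (a : R) N n j :
  odd n != odd j -> ruin_weight a N n j = 0.
Proof.
move=> parity; apply: big1 => t /walk_to_zero_odd.
by rewrite size_tuple => odd_n; rewrite odd_n eqxx in parity.
Qed.

Definition ruin_within (R : ringType) (a : R) (N n j : nat) : R :=
  \sum_(k < n) ruin_weight a N k j.

Section RuinWithin.

Variables (R : comRingType) (a : R) (N : nat).

Lemma ruin_withinS_zero n : ruin_within a N n.+1 0 = 1.
Proof.
by rewrite /ruin_within big_ord_recl ruin_weight0 big1 ?addr0 // => k _; rewrite ruin_weightS.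
Qed.

Lemma ruin_within_out n j : (0 < N)%N -> (N <= j)%N -> ruin_within a N n j = 0.
Proof.
move=> N_gt0 N_le_j; rewrite /ruin_within big1 // => -[[|k] _] _ /=.
  by rewrite ruin_weight0 (_ : (j == 0%N) = false) //; lia.
by rewrite ruin_weightS ifF //; lia.
Qed.

Lemma ruin_withinS n j : (0 < j < N)%N ->
  ruin_within a N n.+1 j = a * ruin_within a N n j.-1 + (1 - a) * ruin_within a N n j.+1.
Proof.
move=> j_in; rewrite /ruin_within big_ord_recl ruin_weight0 (_ : (j == 0%N) = false); last by lia.
by rewrite add0r !mulr_sumr -big_split; apply: eq_bigr => k _; rewrite /= ruin_weightS j_in.
Qed.

End RuinWithin.

Lemma sum_F_ruin_within (R : fieldType) (a : R) d m : a != 0 ->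
  \sum_(0 <= s < m) (F d s)%:R * (a * (1 - a)) ^+ s =
  a ^- 2 * ruin_within a (d + 2) (2 * m).+1 2.
Proof.
move=> a_neq0; elim: m => [|m IH].
  by rewrite big_geq // /ruin_within big_ord1 ruin_weight0 mulr0.
have -> : (2 * m.+1).+1 = (2 * m).+3 by rewrite mulnS.
rewrite big_nat_recr //= IH [in RHS]/ruin_within 2!big_ord_recr /=.
rewrite (@ruin_weight_parity _ _ _ (2 * m).+1); last by rewrite /= oddM.
rewrite addr0 -/(ruin_within a (d + 2) (2 * m).+1 2).
rewrite (_ : (2 * m).+2 = (m + 2) + m)%N; last by lia.
by rewrite ruin_weight_F exprMn exprD; field.
Qed.

Section RuinBounds.

Variables (R : realFieldType) (a : R) (N : nat).
Hypotheses (a_ge0 : 0 <= a) (a_le1 : a <= 1).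

Lemma ruin_weight_ge0 n j : 0 <= ruin_weight a N n j.
Proof.
by apply: sumr_ge0 => t _; rewrite mulr_ge0 ?exprn_ge0 ?subr_ge0.
Qed.

Lemma ruin_within_le1 n j : (0 < N)%N -> ruin_within a N n j <= 1.
Proof.
move=> N_gt0; elim: n j => [|n IH] j; first by rewrite /ruin_within big_ord0 ler01.
case: j => [|j]; first by rewrite ruin_withinS_zero.
case: (ltnP j.+1 N) => [j_lt | N_le]; last by rewrite ruin_within_out.
rewrite ruin_withinS //=.
apply: le_trans (_ : a * 1 + (1 - a) * 1 <= 1); last by rewrite !mulr1 subrKC.
by apply: lerD; apply: ler_wpM2l; rewrite ?subr_ge0.
Qed.

End RuinBounds.

Definition ruin_prob (R : realType) (a : R) (N j : nat) : R :=
  sup (range (ruin_within a N ^~ j)).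

Section RuinProbability.

Variables (R : realType) (a : R) (N : nat).
Hypotheses (a_ge0 : 0 <= a) (a_le1 : a <= 1) (N_gt0 : (0 < N)%N).

Lemma ruin_within_cvg j : ruin_within a N ^~ j @ \oo --> ruin_prob a N j.
Proof.
apply: nondecreasing_cvgn.
  by apply/nondecreasing_seqP => n; rewrite /ruin_within big_ord_recr lerDl ruin_weight_ge0.
by exists 1 => _ [n _ <-]; exact: ruin_within_le1.
Qed.

Lemma ruin_prob_unique j l : ruin_within a N ^~ j @ \oo --> l -> ruin_prob a N j = l.
Proof. exact: cvg_unique (ruin_within_cvg (j := j)). Qed.

Lemma ruin_prob0 : ruin_prob a N 0 = 1.
Proof.
apply: ruin_prob_unique; rewrite -cvg_shiftS; apply: cvg_near_cst.
by apply: nearW => n; exact: ruin_withinS_zero.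
Qed.

Lemma ruin_prob_out j : (N <= j)%N -> ruin_prob a N j = 0.
Proof.
move=> N_le_j; apply: ruin_prob_unique; apply: cvg_near_cst.
by apply: nearW => n; exact: ruin_within_out.
Qed.

Lemma ruin_probS j : (0 < j < N)%N ->
  ruin_prob a N j = a * ruin_prob a N j.-1 + (1 - a) * ruin_prob a N j.+1.
Proof.
move=> j_in; apply: ruin_prob_unique; rewrite -cvg_shiftS.
have -> : [sequence ruin_within a N n.+1 j]_n =
          (fun n => a * ruin_within a N n j.-1 + (1 - a) * ruin_within a N n j.+1).
  by apply/funext => n; exact: ruin_withinS.
by apply: cvgD; apply: cvgMr; exact: ruin_within_cvg.
Qed.

End RuinProbability.

Lemma one_sub_odds_expr_neq0 (R : realFieldType) (a : R) n :
  0 <= a < 1 -> a != 1 - a -> (0 < n)%N -> 1 - (a / (1 - a)) ^+ n != 0.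
Proof.
move=> /andP[a_ge0 a_lt1] a_neq n_gt0; have a1_neq0 : 1 - a != 0 by rewrite subr_eq0 gt_eqF.
rewrite subr_eq0 eq_sym pexpr_eq1 //; last by rewrite divr_ge0 // subr_ge0 ltW.
apply: contraNneq a_neq => odds1.
by rewrite -[a in a == _](divfK a1_neq0) odds1 mul1r.
Qed.

Lemma gamblers_ruin (R : realFieldType) (a : R) (L : nat -> R) N :
  0 <= a < 1 -> a != 1 - a -> (0 < N)%N -> L 0%N = 1 -> L N = 0 ->
  (forall j, (0 < j < N)%N -> L j = a * L j.-1 + (1 - a) * L j.+1) ->
  forall j, (j <= N)%N ->
  L j = ((a / (1 - a)) ^+ j - (a / (1 - a)) ^+ N) / (1 - (a / (1 - a)) ^+ N).
Proof.
move=> a_in a_neq N_gt0 L0 LN Lrec j j_le.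
have rN_neq0 := one_sub_odds_expr_neq0 a_in a_neq N_gt0.
have r_neq1 := one_sub_odds_expr_neq0 a_in a_neq (isT : 0 < 1)%N; rewrite expr1 in r_neq1.
have a1_neq0 : 1 - a != 0 by case/andP: a_in => _ a_lt1; rewrite subr_eq0 gt_eqF.
set r := a / (1 - a) in rN_neq0 r_neq1 *.
set c := (L 0%N - L 1%N) / (1 - r).
(* The recurrence says that the increments [L k - L k.+1] are geometric with
   ratio [r]. *)
have closed k : (k < N)%N -> L k = 1 - c * (1 - r ^+ k) /\ L k.+1 = 1 - c * (1 - r ^+ k.+1).
  elim: k => [|k IH] k_lt.
    by rewrite /c L0 expr0 subrr mulr0 subr0 expr1 divfK //; split => //; ring.
  have [Lk LSk] := IH (ltnW k_lt); split=> //.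
  have -> : L k.+2 = (L k.+1 - a * L k) / (1 - a) by rewrite (Lrec k.+1) //=; field.
  by rewrite Lk LSk !exprS /r; field.
have closed_le k : (k <= N)%N -> L k = 1 - c * (1 - r ^+ k).
  rewrite leq_eqVlt => /orP[/eqP -> | /closed[] //].
  by have := closed N.-1; rewrite prednK // => /(_ (leqnn N))[].
have c_def : c = (1 - r ^+ N)^-1.
  have /eqP := closed_le N (leqnn N); rewrite LN eq_sym subr_eq0 => /eqP c_eq.
  by rewrite -[c](mulfK rN_neq0) -c_eq mul1r.
by rewrite closed_le // c_def; field.
Qed.

Theorem lemma4 (R : realType) (d : nat) (alpha : R) :
  (1 <= d)%N -> 0 < alpha -> alpha < 2^-1 ->
  (fun n : nat => \sum_(0 <= s < n) (F d s)%:R * (alpha * (1 - alpha)) ^+ s)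
    @ \oo -->
  alpha ^- 2 *
    (1 - (1 - 2 * alpha) /
           ((1 - alpha) ^+ 2 * (1 - (alpha / (1 - alpha)) ^+ (d + 2)))).
Proof.
(* The formula also holds for [d = 0], where both sides vanish. *)
move=> _ alpha_gt0 alpha_lt_half.
have alpha_ge0 : 0 <= alpha by exact: ltW.
have alpha_le1 : alpha <= 1 by lra.
have alpha_in : 0 <= alpha < 1 by rewrite alpha_ge0; lra.
have alpha_neq : alpha != 1 - alpha by apply/eqP; lra.
have N_gt0 : (0 < d + 2)%N by rewrite addn2.
have -> : (fun n => \sum_(0 <= s < n) (F d s)%:R * (alpha * (1 - alpha)) ^+ s) =
          (fun m => alpha ^- 2 * ruin_within alpha (d + 2) (2 * m).+1 2).
  by apply/funext => m; rewrite sum_F_ruin_within ?lt0r_neq0.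
have ruin2 := gamblers_ruin alpha_in alpha_neq N_gt0 (ruin_prob0 alpha_ge0 alpha_le1 N_gt0)
  (ruin_prob_out alpha_ge0 alpha_le1 N_gt0 (leqnn _)) (ruin_probS alpha_ge0 alpha_le1 N_gt0)
  (leq_addl d 2).
rewrite -[X in _ --> X](_ : alpha ^- 2 * ruin_prob alpha (d + 2) 2 = _); last first.
  rewrite ruin2; congr (_ * _); field.
  by rewrite one_sub_odds_expr_neq0 // subr_eq0 eq_sym lt_eqF //; lra.
apply: cvgMr; have odd_indices := cvg_comp _ _ (@cvg_mulnl 2 isT) (cvg_addnl 1).
exact: cvg_comp _ _ odd_indices (ruin_within_cvg alpha_ge0 alpha_le1 N_gt0 (j := 2)).
Qed.
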